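(* Let $R$ be a commutative ring, $I$ an ideal of $R$, $n\ge 3$, and $a\in R$ non-nilpotent. Let $\alpha(X)\in\mathrm{EO}_{2n}(R_a[X],I_a[X])$ with $\alpha(0)=\mathrm{Id}$. Then there is $d\ge 0$ such that for every $b\in a^dR$ there exists $\alpha^*(X)\in\mathrm{EO}_{2n}(R[X],I[X])$ with $\alpha^*(0)=\mathrm{Id}$ whose image under the localisation map $\mathrm{EO}_{2n}(R[X])\to\mathrm{EO}_{2n}(R_a[X])$ is $\alpha(bX)$.
   Context: Let $\sigma$ be the permutation of $\{1,\dots,2n\}$ with $\sigma(2i)=2i-1$, $\sigma(2i-1)=2i$. For a commutative ring $A$, $z\in A$ and $1\le i\ne j\le 2n$ with $i\ne\sigma(j)$, $oe_{ij}(z)=1_{2n}+z e_{ij}-z e_{\sigma(j)\sigma(i)}$ (orthogonal with respect to $\widetilde\psi_n=\sum_{i=1}^n(e_{2i-1,2i}+e_{2i,2i-1})$), and $\mathrm{EO}_{2n}(A)$ is the group they generate. For an ideal $J$ of $A$, $\mathrm{EO}_{2n}(J)$ is generated by the $oe_{ij}(x)$, $x\in J$, and $\mathrm{EO}_{2n}(A,J)$ is the normal closure of $\mathrm{EO}_{2n}(J)$ in $\mathrm{EO}_{2n}(A)$. $R_a$ is the localisation at $\{a^i\}$, $I_a[X]=IR_a[X]$, $I[X]=IR[X]$. *)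

From HB Require Import structures.
From mathcomp Require Import all_boot all_order all_algebra.
Set Implicit Arguments. Unset Strict Implicit. Unset Printing Implicit Defensive.
Import GRing.Theory.
Local Open Scope ring_scope.

Definition is_ideal (A : comNzRingType) (J : A -> Prop) : Prop :=
  [/\ J 0, (forall x y, J x -> J y -> J (x + y)) & (forall r x, J x -> J (r * x))].

(* Extension J B of an ideal J of A along f : A -> B: finite sums sum f(x_i) b_i, x_i in J. *)
Definition ext_ideal (A B : comNzRingType) (f : A -> B) (J : A -> Prop) (y : B) : Prop :=
  exists s : seq (A * B), {in s, forall p, J p.1} /\ y = \sum_(p <- s) f p.1 * p.2.

(* phi : R -> S is a localisation of R at the powers of a (characterising property). *)
Definition is_localization (R S : comNzRingType) (a : R) (phi : {rmorphism R -> S}) : Prop :=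
  [/\ exists u, phi a * u = 1,
      (forall s : S, exists r k, s * phi a ^+ k = phi r)
    & (forall r, phi r = 0 -> exists N, a ^+ N * r = 0)].

(* 0-based version of sigma: 0<->1, 2<->3, ... (1-based: 2i-1 <-> 2i). *)
Definition sigman (k : nat) : nat := if odd k then k.-1 else k.+1.

Definition oe (A : comNzRingType) (n : nat) (i j : 'I_(n.*2)) (z : A) : 'M[A]_(n.*2) :=
  \matrix_(k, l) ((k == l)%:R + z * ((k == i) && (l == j))%:R
                  - z * (((k : nat) == sigman j) && ((l : nat) == sigman i))%:R).

Inductive gen_group (A : comNzRingType) (m : nat) (P : 'M[A]_m -> Prop) : 'M[A]_m -> Prop :=
| gen_one : gen_group P 1%:M
| gen_mul g M : P g -> gen_group P M -> gen_group P (g *m M)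
| gen_mulinv g h M : P g -> h *m g = 1%:M -> g *m h = 1%:M -> gen_group P M ->
    gen_group P (h *m M).

Definition oe_gen (A : comNzRingType) (n : nat) (J : A -> Prop) (M : 'M[A]_(n.*2)) : Prop :=
  exists (i j : 'I_(n.*2)) (z : A),
    [/\ i != j, (i : nat) != sigman j, J z & M = oe i j z].
Arguments oe_gen {A} n J M.

Definition EO (A : comNzRingType) (n : nat) : 'M[A]_(n.*2) -> Prop :=
  gen_group (oe_gen n (fun _ => True)).
Arguments EO {A} n _.

Definition EOI (A : comNzRingType) (n : nat) (J : A -> Prop) : 'M[A]_(n.*2) -> Prop :=
  gen_group (oe_gen n J).
Arguments EOI {A} n J _.

Definition EOrel (A : comNzRingType) (n : nat) (J : A -> Prop) : 'M[A]_(n.*2) -> Prop :=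
  gen_group (fun M => exists g g' h,
    [/\ EO n g, g' *m g = 1%:M, g *m g' = 1%:M, EOI n J h & M = g *m h *m g']).

Arguments EOrel {A} n J _.

(* Write lam = phi a.  Every polynomial over S is a fraction r / lam^k with r over R (with
   numerator in I[X] for entries of I_a[X]), and for b in a^d R with d large the substitution
   X := bX makes z(bX) - z(0) the image of an element of a^M I[X].  Hence every generator x of
   EO_2n(R_a[X], I_a[X]) satisfies x(bX) = psi(W) x(0) with W in the relative group of level M.
   To multiply such identities the constant parts x(0), which are elementary matrices with
   denominators, are moved to the right past images psi(W): by the Chevalley commutator formula
   (and, for the opposite root, a commutator through a third index, which is where n >= 3 is
   used) conjugation by a root element with denominator lam^k maps the image of the level-N
   relative group into that of level M once N >= 2(M + k).  For a conjugate g h g^-1 one also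
   needs that the commutator of g(0) h(0) g(0)^-1 with psi(V) lies in the image of the relative
   group, which holds because h(0) has numerators in I.  At level 0 this gives
   alpha(bX) = psi(W), and W is then corrected by its constant term to get W(0) = 1. *)

From HB Require Import structures.
From mathcomp Require Import all_boot all_order all_algebra.
From mathcomp Require Import ring zify.
Import GRing.Theory.
Local Open Scope ring_scope.
Set Implicit Arguments. Unset Strict Implicit. Unset Printing Implicit Defensive.

Lemma sigmanK : involutive sigman.
Proof. by rewrite /sigman => -[|k] //=; case: (boolP (odd k)) => [|/negbTE] Ho /=; rewrite Ho. Qed.

Lemma half_sigman k : (sigman k)./2 = k./2.
Proof.
rewrite /sigman; have E := odd_double_half k; case: ifP => Ho; rewrite Ho in E.
  by rewrite -E /= add0n doubleK uphalf_double.
by rewrite -E /= add0n uphalf_double doubleK.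
Qed.

Lemma ltn_sigman n (i : 'I_(n.*2)) : (sigman i < n.*2)%N.
Proof.
have := ltn_ord i; rewrite /sigman; case: ifP => Ho; first by lia.
rewrite -[X in (X < _)%N -> _](odd_double_half i) Ho /= add0n ltn_double => lt_i.
by rewrite -[X in (X.+1 < _)%N](odd_double_half i) Ho /= add0n -doubleS leq_double.
Qed.

Section Involution.
Variable n : nat.
Implicit Types i j : 'I_(n.*2).

Definition sg i : 'I_(n.*2) := Ordinal (ltn_sigman i).

Lemma sgK : involutive sg.
Proof. by move=> i; apply/val_inj => /=; rewrite sigmanK. Qed.

Lemma eq_sg i j : (sg i == sg j) = (i == j).
Proof. exact: (inj_eq (inv_inj sgK)). Qed.

Lemma eq_sgl i j : (sg i == j) = (i == sg j).
Proof. by rewrite -eq_sg sgK. Qed.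

Lemma sg_eq_id i : (sg i == i) = false.
Proof.
apply/negbTE; rewrite -val_eqE /= /sigman; case: (val i) => [|k] //=.
by case: ifP => _; lia.
Qed.

Lemma eq_id_sg i : (i == sg i) = false.
Proof. by rewrite eq_sym sg_eq_id. Qed.

(* The index pairs {2l, 2l+1} are the fibres of halving, and n >= 3 of them
   cannot all meet {i, j, sg i, sg j}. *)
Lemma exists_fresh_index i j : (3 <= n)%N ->
  exists h, [/\ h != i, h != j, h != sg i & h != sg j].
Proof.
move=> n_ge3.
have [l [lt_l3 l_i l_j]] : exists l, [/\ (l < 3)%N, l != i./2 & l != j./2].
  have [/andP[? ?]|] := boolP ((0 != i./2) && (0 != j./2)); first by exists 0%N.
  have [/andP[? ?]|] := boolP ((1 != i./2) && (1 != j./2)); first by exists 1%N.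
  by rewrite !negb_and !negbK => /orP[]/eqP e0 /orP[]/eqP e1; exists 2%N; split; lia.
have lt_l : (l.*2 < n.*2)%N by rewrite ltn_double; lia.
exists (Ordinal lt_l); split; apply/eqP => /(congr1 (fun h => (val h)./2)) /=;
  rewrite doubleK ?half_sigman => e; [move: l_i|move: l_j|move: l_i|move: l_j];
  by rewrite e eqxx.
Qed.

Definition admissible i j := (i != j) && (i != sg j).

Lemma admissibleC i j : admissible i j -> admissible j i.
Proof. by case/andP => ij isj; rewrite /admissible eq_sym ij -eq_sgl eq_sym. Qed.

Lemma admissible_sg i j : admissible i j -> admissible (sg j) (sg i).
Proof.
by case/andP => ij isj; rewrite /admissible eq_sg sgK eq_sym ij eq_sym isj.
Qed.

Lemma admissible_fresh h i : h != i -> h != sg i -> admissible h i.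
Proof. by move=> hi hsi; apply/andP. Qed.

End Involution.

(* Decides the Kronecker deltas [x == y] produced by products of matrix units, from the
   hypotheses [x != y] in context closed under symmetry and [sg]. *)
Ltac index_simpl :=
  repeat match goal with H : is_true (~~ _) |- _ => move: H end;
  rewrite ?eq_sg ?sgK ?eq_sgl ?eq_sg ?sgK;
  repeat match goal with |- is_true (~~ (?x == ?y)) -> _ =>
    let H1 := fresh "F" in let H2 := fresh "F" in
    move=> /negbTE H1;
    let H3 := fresh "F" in let H4 := fresh "F" in
    have H2 : (y == x) = false := etrans (eq_sym y x) H1;
    have H3 : (sg x == sg y) = false := etrans (eq_sg x y) H1;
    have H4 : (sg y == sg x) = false := etrans (eq_sg y x) H2;
    rewrite ?sgK in H3 H4 end;
  rewrite ?eqxx ?sg_eq_id ?eq_id_sg;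
  repeat match goal with H : (?x == ?y) = false |- context[?x == ?y] => rewrite H end;
  rewrite ?mulr0n ?mulr1n.

Ltac entrywise_ring := apply/matrixP => ? ?; rewrite !mxE; ring.

Section ElementaryOrthogonal.
Variables (A : comNzRingType) (n : nat).
Local Notation m := (n.*2).
Local Notation E := (@delta_mx A m m).
Implicit Types (i j k l h : 'I_m) (x y z c u v : A).

Definition skew_unit i j : 'M[A]_m := E i j - E (sg j) (sg i).

Lemma oeE i j z : oe i j z = 1%:M + z *: skew_unit i j.
Proof. by apply/matrixP => k l; rewrite !mxE -!val_eqE /= mulrBr addrA. Qed.

Lemma mulmxMnl (B C : 'M[A]_m) t : (B *+ t) *m C = (B *m C) *+ t.
Proof. exact: (raddfMn (mulmxr C)). Qed.

Lemma mulmxMnr (B C : 'M[A]_m) t : B *m (C *+ t) = (B *m C) *+ t.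
Proof. exact: raddfMn. Qed.

Lemma skew_unitM i j k l : skew_unit i j *m skew_unit k l =
  E i l *+ (j == k) - E i (sg k) *+ (j == sg l) - E (sg j) l *+ (sg i == k)
  + E (sg j) (sg k) *+ (i == l).
Proof.
rewrite /skew_unit mulmxBl !mulmxBr !mul_delta_mx_cond eq_sg.
by rewrite opprB !addrA addrAC.
Qed.

Lemma mul1D_scale x y (B C : 'M[A]_m) :
  (1%:M + x *: B) *m (1%:M + y *: C) = 1%:M + x *: B + y *: C + (x * y) *: (B *m C).
Proof.
rewrite mulmxDl !mulmxDr !mul1mx !mulmx1 -scalemxAl -scalemxAr scalerA.
by rewrite !addrA; congr (_ + _); rewrite addrAC.
Qed.

Lemma oeD i j x y : admissible i j -> oe i j x *m oe i j y = oe i j (x + y).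
Proof.
by case/andP; rewrite !oeE mul1D_scale skew_unitM => ? ?; index_simpl; entrywise_ring.
Qed.

Lemma oe0 i j : oe i j (0 : A) = 1%:M.
Proof. by rewrite oeE scale0r addr0. Qed.

Lemma oeNr i j x : admissible i j -> oe i j x *m oe i j (- x) = 1%:M.
Proof. by move=> ij; rewrite oeD // subrr oe0. Qed.

Lemma oeNl i j x : admissible i j -> oe i j (- x) *m oe i j x = 1%:M.
Proof. by move=> ij; rewrite oeD // addNr oe0. Qed.

Lemma oe_sg i j z : oe (sg j) (sg i) z = oe i j (- z).
Proof. by rewrite !oeE /skew_unit !sgK; entrywise_ring. Qed.

Lemma map_oe (B : comNzRingType) (f : {rmorphism A -> B}) i j z :
  map_mx f (oe i j z) = oe i j (f z).
Proof. by apply/matrixP => k l; rewrite !mxE rmorphB rmorphD !rmorphM !rmorph_nat. Qed.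

Ltac oe_expand := rewrite !oeE /skew_unit;
  repeat progress rewrite ?mulmxDl ?mulmxDr ?mulmxBl ?mulmxBr ?mul1mx ?mulmx1
     ?mulmxN ?mulNmx -?scalemxAl -?scalemxAr ?mulmxMnl ?mulmxMnr ?mul_delta_mx_cond.

Lemma oe_commute i j k l c y : admissible i j -> admissible k l ->
  j != k -> j != sg l -> i != l -> sg i != k ->
  oe i j c *m oe k l y = oe k l y *m oe i j c.
Proof.
case/andP => ? ?; case/andP => ? ? ? ? ? ?.
by rewrite !oeE !mul1D_scale !skew_unitM; index_simpl; entrywise_ring.
Qed.

Lemma oe_commute_sgl i j c y : admissible i j -> admissible j (sg i) ->
  oe i j c *m oe j (sg i) y = oe j (sg i) y *m oe i j c.
Proof. by case/andP => ? ?; case/andP => ? ?; oe_expand; index_simpl; entrywise_ring. Qed.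

Lemma oe_commute_sgr i j c y : admissible i j -> admissible (sg j) i ->
  oe i j c *m oe (sg j) i y = oe (sg j) i y *m oe i j c.
Proof. by case/andP => ? ?; case/andP => ? ?; oe_expand; index_simpl; entrywise_ring. Qed.

Lemma oe_commute_chainr i j l c y : admissible i j -> admissible j l -> l != i -> l != sg i ->
  oe i j c *m oe j l y = oe j l y *m oe i l (c * y) *m oe i j c.
Proof.
by case/andP => ? ?; case/andP => ? ? ? ?; oe_expand; index_simpl; entrywise_ring.
Qed.

Lemma oe_commute_chainl i j k c y : admissible i j -> admissible k i -> k != j -> k != sg j ->
  oe i j c *m oe k i y = oe k i y *m oe k j (- (c * y)) *m oe i j c.
Proof.
by case/andP => ? ?; case/andP => ? ? ? ?; oe_expand; index_simpl; entrywise_ring.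
Qed.

End ElementaryOrthogonal.

Section Chevalley.
Variables (A : comNzRingType) (n : nat).
Local Notation m := (n.*2).
Implicit Types (i j k l h p q : 'I_m) (x y z c u v : A).

Definition chevalley_form i j c k l y := exists p q (z : int), admissible p q /\
  oe i j c *m oe k l y = oe k l y *m oe p q (z%:~R * (c * y)) *m oe i j c.

Lemma chevalley_form_sg i j c k l y :
  chevalley_form i j c (sg l) (sg k) (- y) -> chevalley_form i j c k l y.
Proof.
case=> p [q [z [pq E]]]; exists p, q, (- z); split => //.
by move: E; rewrite oe_sg opprK !mulrN => ->; rewrite mulrNz mulNr.
Qed.

Lemma chevalley_form_commute i j c k l y :
  oe i j c *m oe k l y = oe k l y *m oe i j c -> admissible i j -> chevalley_form i j c k l y.
Proof. by move=> E ij; exists i, j, 0; split; rewrite // mul0r oe0 mulmx1. Qed.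

Lemma chevalley_form_chainr i j l c y : admissible i j -> admissible j l -> l != i ->
  chevalley_form i j c j l y.
Proof.
move=> ij jl li; have [El|lsi] := eqVneq l (sg i).
  by subst l; apply: chevalley_form_commute => //; apply: oe_commute_sgl.
exists i, l, 1; split; last by rewrite mul1r; apply: oe_commute_chainr.
by apply/admissibleC/admissible_fresh.
Qed.

Lemma chevalley_form_chainl i j k c y : admissible i j -> admissible k i -> k != j ->
  chevalley_form i j c k i y.
Proof.
move=> ij ki kj; have [Ek|ksj] := eqVneq k (sg j).
  by subst k; apply: chevalley_form_commute => //; apply: oe_commute_sgr.
exists k, j, (-1); split; first exact: admissible_fresh.
by rewrite mulrN1z mulN1r; apply: oe_commute_chainl.
Qed.

(* Chevalley's commutator formula: away from the opposite root (j, i), which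
   also occurs as (sg i, sg j), a commutator of root elements is a root element. *)
Lemma oe_chevalley i j c k l y : admissible i j -> admissible k l ->
  ~~ ((k == j) && (l == i)) -> ~~ ((k == sg i) && (l == sg j)) ->
  chevalley_form i j c k l y.
Proof.
move=> ij kl not_ji not_sij.
have [jk|jk] := eqVneq j k.
  rewrite -jk in kl not_ji *; apply: chevalley_form_chainr => //.
  by apply: contraNneq not_ji => ->; rewrite !eqxx.
have [jsl|jsl] := eqVneq j (sg l).
  apply: chevalley_form_sg; rewrite -jsl; apply: chevalley_form_chainr => //.
    by rewrite jsl; apply: admissible_sg.
  apply: contraNneq not_sij => ski.
  by rewrite -ski sgK eqxx -eq_sgl -jsl eqxx.
have [il|il] := eqVneq i l.
  rewrite -il in kl not_ji *; apply: chevalley_form_chainl => //.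
  by apply: contraNneq not_ji => ->; rewrite !eqxx.
have [sik|sik] := eqVneq (sg i) k.
  apply: chevalley_form_sg; rewrite -sik sgK; apply: chevalley_form_chainl => //.
    by move: (admissible_sg kl); rewrite -sik sgK.
  apply: contraNneq not_sij => slj.
  by rewrite -sik eqxx -eq_sgl slj eqxx.
by apply: chevalley_form_commute => //; apply: oe_commute.
Qed.

Lemma oe_commutator_fresh i j h u v : admissible i j ->
  h != i -> h != j -> h != sg i -> h != sg j ->
  oe j i (u * v) = oe h i (- v) *m oe j h u *m oe h i v *m oe j h (- u).
Proof.
move=> ij hi hj hsi hsj.
have jh : admissible j h by apply: admissibleC; apply: admissible_fresh.
have hi' : admissible h i by apply: admissible_fresh.
case/andP: (ij) => ij' isj.
rewrite -!mulmxA (mulmxA (oe j h u)) oe_commute_chainr //.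
by rewrite -!mulmxA oeNr // mulmx1 !mulmxA oeNl // mul1mx.
Qed.

End Chevalley.

Section GeneratedGroup.
Variables (A : comNzRingType) (m : nat).
Implicit Types (P Q : 'M[A]_m -> Prop) (g h X Y Z : 'M[A]_m).

Lemma mulmx_inv_uniq X Y Z : X *m Y = 1%:M -> Z *m X = 1%:M -> Z = Y.
Proof. by move=> XY ZX; rewrite -[Z]mulmx1 -XY mulmxA ZX mul1mx. Qed.

Lemma gen_group_mul P X Y : gen_group P X -> gen_group P Y -> gen_group P (X *m Y).
Proof.
elim=> [|g M Pg _ IH|g h M Pg hg gh _ IH] PY; first by rewrite mul1mx.
  by rewrite -mulmxA; apply: gen_mul => //; apply: IH.
by rewrite -mulmxA; apply: gen_mulinv hg gh _ => //; apply: IH.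
Qed.

Lemma gen_group_gen P g : P g -> gen_group P g.
Proof. by move=> Pg; rewrite -[g]mulmx1; apply: gen_mul => //; apply: gen_one. Qed.

Lemma gen_group_genV P g h : P g -> h *m g = 1%:M -> g *m h = 1%:M -> gen_group P h.
Proof. by move=> Pg hg gh; rewrite -[h]mulmx1; apply: gen_mulinv hg gh _ => //; apply: gen_one. Qed.

Lemma gen_group_sub P Q X : (forall g, P g -> Q g) -> gen_group P X -> gen_group Q X.
Proof.
move=> PQ; elim=> [|g M Pg _ IH|g h M Pg hg gh _ IH]; first exact: gen_one.
  by apply: gen_mul => //; apply: PQ.
by apply: gen_mulinv hg gh IH; apply: PQ.
Qed.

Definition invertible_gens P :=
  forall g, P g -> exists h, h *m g = 1%:M /\ g *m h = 1%:M.

Lemma gen_groupV P X : invertible_gens P -> gen_group P X ->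
  exists X', [/\ gen_group P X', X *m X' = 1%:M & X' *m X = 1%:M].
Proof.
move=> invP; elim=> [|g M Pg _ [M' [PM' h1 h2]]|g h M Pg hg gh _ [M' [PM' h1 h2]]].
- by exists 1%:M; rewrite mul1mx; split => //; apply: gen_one.
- have [h [hg gh]] := invP _ Pg; exists (M' *m h); split.
  + by apply: gen_group_mul => //; apply: gen_group_genV Pg hg gh.
  + by rewrite mulmxA -(mulmxA g) h1 mulmx1.
  + by rewrite mulmxA -(mulmxA M') hg mulmx1.
- exists (M' *m g); split.
  + by apply: gen_group_mul => //; apply: gen_group_gen.
  + by rewrite mulmxA -(mulmxA h) h1 mulmx1.
  + by rewrite mulmxA -(mulmxA M') gh mulmx1.
Qed.

Lemma gen_group_ind P (C : 'M[A]_m -> Prop) :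
  (forall g h, P g -> h *m g = 1%:M -> P h) -> C 1%:M ->
  (forall g X, P g -> gen_group P X -> C X -> C (g *m X)) ->
  forall X, gen_group P X -> C X.
Proof.
move=> PV C1 CM X; elim=> [|g Y Pg PY CY|g h Y Pg hg _ PY CY] //; first exact: CM.
by apply: CM => //; apply: PV hg.
Qed.

Lemma gen_group_linv P X Y : invertible_gens P -> gen_group P X -> Y *m X = 1%:M ->
  gen_group P Y.
Proof. by move=> invP /(gen_groupV invP)[X' [PX' XX' _]] YX; rewrite (mulmx_inv_uniq XX' YX). Qed.

End GeneratedGroup.

Lemma gen_group_map (A B : comNzRingType) m (P : 'M[A]_m -> Prop) (Q : 'M[B]_m -> Prop)
    (f : {rmorphism A -> B}) X :
  (forall g, P g -> Q (map_mx f g)) -> gen_group P X -> gen_group Q (map_mx f X).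
Proof.
move=> PQ; elim=> [|g M Pg _ IH|g h M Pg hg gh _ IH].
- by rewrite map_mx1; apply: gen_one.
- by rewrite map_mxM; apply: gen_mul => //; apply: PQ.
- rewrite map_mxM; apply: (gen_mulinv (g := map_mx f g)) => //.
  + exact: PQ.
  + by rewrite -map_mxM hg map_mx1.
  + by rewrite -map_mxM gh map_mx1.
Qed.

Definition conj_gen (A : comNzRingType) m (P Q : 'M[A]_m -> Prop) W := exists g g' h,
  [/\ gen_group P g, g' *m g = 1%:M, g *m g' = 1%:M, gen_group Q h & W = g *m h *m g'].

Definition normal_closure (A : comNzRingType) m (P Q : 'M[A]_m -> Prop) :=
  gen_group (conj_gen P Q).

Definition in_rcoset (A : comNzRingType) m (P Q : 'M[A]_m -> Prop) (X W : 'M[A]_m) :=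
  exists R, normal_closure P Q R /\ W = R *m X.

Lemma normal_closure_sub (A : comNzRingType) m (P P' Q Q' : 'M[A]_m -> Prop) X :
  (forall g, P g -> P' g) -> (forall g, Q g -> Q' g) ->
  normal_closure P Q X -> normal_closure P' Q' X.
Proof.
move=> PP' QQ'; apply: gen_group_sub => _ [g [g' [h [Pg g'g gg' Qh ->]]]].
by exists g, g', h; split => //; apply: gen_group_sub Pg || apply: gen_group_sub Qh.
Qed.

Section NormalClosure.
Variables (A : comNzRingType) (m : nat) (P Q : 'M[A]_m -> Prop).
Hypotheses (invP : invertible_gens P) (invQ : invertible_gens Q).
Local Notation G := (gen_group P).
Local Notation N := (normal_closure P Q).
Implicit Types (g h R W X Y : 'M[A]_m).

Lemma normal_closure1 : N 1%:M.
Proof. exact: gen_one. Qed.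

Lemma normal_closure_mul X Y : N X -> N Y -> N (X *m Y).
Proof. exact: gen_group_mul. Qed.

Lemma normal_closure_of X : gen_group Q X -> N X.
Proof.
move=> QX; apply: gen_group_gen; exists 1%:M, 1%:M, X.
by split; rewrite ?mul1mx ?mulmx1 //; apply: gen_one.
Qed.

Lemma invertible_conj_gen : invertible_gens (conj_gen P Q).
Proof.
move=> _ [g [g' [h [Pg g'g gg' Qh ->]]]]; have [h' [_ hh' h'h]] := gen_groupV invQ Qh.
exists (g *m h' *m g'); split.
  by rewrite !mulmxA -(mulmxA _ g' g) g'g mulmx1 -(mulmxA _ h' h) h'h mulmx1.
by rewrite !mulmxA -(mulmxA _ g' g) g'g mulmx1 -(mulmxA _ h h') hh' mulmx1.
Qed.

Lemma normal_closureV X : N X -> exists X', [/\ N X', X *m X' = 1%:M & X' *m X = 1%:M].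
Proof. exact: (gen_groupV invertible_conj_gen). Qed.

Lemma conj_gen_linv g h : conj_gen P Q g -> h *m g = 1%:M -> conj_gen P Q h.
Proof.
move=> [x [x' [y [Px x'x xx' Qy Eg]]]] hg; have [y' [Qy' yy' y'y]] := gen_groupV invQ Qy.
exists x, x', y'; split => //; apply: mulmx_inv_uniq hg.
by rewrite Eg !mulmxA -(mulmxA _ x' x) x'x mulmx1 -(mulmxA _ y y') yy' mulmx1.
Qed.

Lemma conj_gen_conj X X' W : G X -> X' *m X = 1%:M -> X *m X' = 1%:M ->
  conj_gen P Q W -> conj_gen P Q (X *m W *m X').
Proof.
move=> GX X'X XX' [g [g' [h [Pg g'g gg' Qh ->]]]].
exists (X *m g), (g' *m X'), h; split => //.
- exact: gen_group_mul.
- by rewrite mulmxA -(mulmxA g') X'X mulmx1.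
- by rewrite mulmxA -(mulmxA X) gg' mulmx1.
- by rewrite !mulmxA.
Qed.

Lemma normal_closure_conj X X' W : G X -> X' *m X = 1%:M -> X *m X' = 1%:M ->
  N W -> N (X *m W *m X').
Proof.
move=> GX X'X XX'.
have conjM Y Z : X *m (Y *m Z) *m X' = (X *m Y *m X') *m (X *m Z *m X').
  by rewrite !mulmxA -(mulmxA _ X' X) X'X mulmx1.
elim=> [|g M Pg _ IH|g h M Pg hg gh _ IH]; first by rewrite mulmx1 XX'; apply: gen_one.
  by rewrite conjM; apply: normal_closure_mul IH; apply/gen_group_gen/conj_gen_conj.
rewrite conjM; apply: normal_closure_mul IH.
apply: (gen_group_genV (g := X *m g *m X')); first exact: conj_gen_conj.
  by rewrite -conjM hg mulmx1 XX'.
by rewrite -conjM gh mulmx1 XX'.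
Qed.

Lemma normal_closure_pushl X R : G X -> N R -> exists R', N R' /\ X *m R = R' *m X.
Proof.
move=> GX NR; have [X' [_ XX' X'X]] := gen_groupV invP GX.
exists (X *m R *m X'); split; first exact: normal_closure_conj.
by rewrite -mulmxA X'X mulmx1.
Qed.

Lemma normal_closure_subgroup X : (forall Y, gen_group Q Y -> G Y) -> N X -> G X.
Proof.
move=> QG.
have GN g : conj_gen P Q g -> G g.
  case=> [x [x' [h [Gx x'x xx' Qh ->]]]].
  rewrite -mulmxA; apply: gen_group_mul => //.
  by apply: gen_group_mul; [apply: QG | apply: gen_group_linv x'x].
elim=> [|g M Ng _ IH|g h M Ng hg gh _ IH]; first exact: gen_one.
  by apply: gen_group_mul IH; apply: GN.
by apply: gen_group_mul IH; apply: gen_group_linv hg; [apply: invP | apply: GN].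
Qed.

Lemma normal_closure_commutator X X' Y Y' : G X -> X' *m X = 1%:M -> X *m X' = 1%:M ->
  N Y -> Y *m Y' = 1%:M -> N (X' *m Y *m X *m Y').
Proof.
move=> GX X'X XX' NY YY'; have [Y'' [NY'' _ Y''Y]] := normal_closureV NY.
rewrite -(mulmx_inv_uniq YY' Y''Y); apply: normal_closure_mul NY''.
by apply: normal_closure_conj => //; apply: gen_group_linv X'X.
Qed.

Lemma in_rcoset_refl X : in_rcoset P Q X X.
Proof. by exists 1%:M; rewrite mul1mx; split => //; apply: normal_closure1. Qed.

Lemma in_rcoset_mulr X Y : G X -> N Y -> in_rcoset P Q X (X *m Y).
Proof. exact: normal_closure_pushl. Qed.

Lemma in_rcoset_mul X1 X2 W1 W2 : G X1 ->
  in_rcoset P Q X1 W1 -> in_rcoset P Q X2 W2 -> in_rcoset P Q (X1 *m X2) (W1 *m W2).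
Proof.
move=> GX1 [R1 [NR1 ->]] [R2 [NR2 ->]].
have [R2' [NR2' E]] := normal_closure_pushl GX1 NR2.
exists (R1 *m R2'); split; first exact: normal_closure_mul.
by rewrite -mulmxA (mulmxA X1) E !mulmxA.
Qed.

Lemma in_rcosetV X X' W W' : G X -> X' *m X = 1%:M -> W' *m W = 1%:M ->
  in_rcoset P Q X W -> in_rcoset P Q X' W'.
Proof.
move=> GX X'X W'W [R [NR EW]].
have [X'' [_ XX'' X''X]] := gen_groupV invP GX.
have XX' : X *m X' = 1%:M by rewrite (mulmx_inv_uniq XX'' X'X).
have [R' [NR' RR' _]] := normal_closureV NR.
have -> : W' = X' *m R'.
  by apply: mulmx_inv_uniq W'W; rewrite EW mulmxA -(mulmxA R) XX' mulmx1.
exists (X' *m R' *m X); split; last by rewrite -mulmxA XX' mulmx1.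
by apply: normal_closure_conj => //; apply: gen_group_linv X'X.
Qed.

Lemma in_rcoset_commutator X X' Y Y' V V' U U' : G X -> G Y ->
  X' *m X = 1%:M -> Y' *m Y = 1%:M -> V' *m V = 1%:M -> U' *m U = 1%:M ->
  in_rcoset P Q X V -> in_rcoset P Q Y U ->
  in_rcoset P Q (X' *m Y *m X *m Y') (V' *m U *m V *m U').
Proof.
move=> GX GY X'X Y'Y V'V U'U XV YU.
have GX' := gen_group_linv invP GX X'X.
have GX'Y := gen_group_mul GX' GY.
apply: in_rcoset_mul; first exact: gen_group_mul.
  by apply: in_rcoset_mul => //; apply: in_rcoset_mul => //; apply: in_rcosetV XV.
exact: in_rcosetV YU.
Qed.

End NormalClosure.

Arguments normal_closure1 {A m P Q}.
Arguments normal_closure_of {A m P Q X}.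

Definition whole (T : Type) : T -> Prop := fun _ => True.
Arguments whole {T} _.

Section Ideals.
Variables (A : comNzRingType) (J : A -> Prop).
Hypothesis idealJ : is_ideal J.
Implicit Types x r : A.

Lemma is_ideal_whole : is_ideal (@whole A).
Proof. by []. Qed.

Lemma is_idealMl r x : J x -> J (r * x).
Proof. by case: idealJ => _ _; apply. Qed.

Lemma is_idealMr r x : J x -> J (x * r).
Proof. by rewrite mulrC; apply: is_idealMl. Qed.

Lemma is_idealN x : J x -> J (- x).
Proof. by rewrite -mulN1r; apply: is_idealMl. Qed.

End Ideals.

Arguments is_ideal_whole {A}.

Section Words.
Variables (A : comNzRingType) (n : nat).
Implicit Types (K : A -> Prop) (i j : 'I_(n.*2)) (z : A) (g X : 'M[A]_(n.*2)).

Lemma oe_genP K g : oe_gen n K g -> exists i j z, [/\ admissible i j, K z & g = oe i j z].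
Proof. by case=> i [j [z [ij isj Kz ->]]]; exists i, j, z; split => //; apply/andP. Qed.

Lemma oe_gen_oe K i j z : admissible i j -> K z -> oe_gen n K (oe i j z).
Proof. by case/andP => ij isj Kz; exists i, j, z. Qed.

Lemma invertible_oe_gen K : invertible_gens (oe_gen n K).
Proof. by move=> _ /oe_genP[i [j [z [ij _ ->]]]]; exists (oe i j (- z)); rewrite oeNl ?oeNr. Qed.

Lemma EOI_oe K i j z : admissible i j -> K z -> EOI n K (oe i j z).
Proof. by move=> ij Kz; apply/gen_group_gen/oe_gen_oe. Qed.

Lemma EOI_ind K (C : 'M[A]_(n.*2) -> Prop) : (forall z, K z -> K (- z)) -> C 1%:M ->
  (forall i j z X, admissible i j -> K z -> EOI n K X -> C X -> C (oe i j z *m X)) ->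
  forall X, EOI n K X -> C X.
Proof.
move=> KN C1 CM; apply: gen_group_ind => // [g h|g X].
  case/oe_genP=> i [j [z [ij Kz ->]]] hg; rewrite (mulmx_inv_uniq (oeNr z ij) hg).
  by apply: oe_gen_oe => //; apply: KN.
by case/oe_genP=> i [j [z [ij Kz ->]]]; apply: CM.
Qed.

Lemma EOI_sub K K' X : (forall z, K z -> K' z) -> EOI n K X -> EOI n K' X.
Proof.
move=> KK'; apply: gen_group_sub => _ /oe_genP[i [j [z [ij Kz ->]]]].
by apply: oe_gen_oe => //; apply: KK'.
Qed.

End Words.

Lemma EOI_map (A B : comNzRingType) n (f : {rmorphism A -> B}) (K : A -> Prop) (K' : B -> Prop)
    (X : 'M[A]_(n.*2)) :
  (forall z, K z -> K' (f z)) -> EOI n K X -> EOI n K' (map_mx f X).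
Proof.
move=> KK'; apply: gen_group_map => _ /oe_genP[i [j [z [ij Kz ->]]]].
by rewrite map_oe; apply: oe_gen_oe => //; apply: KK'.
Qed.

Lemma EOrel_map (A B : comNzRingType) n (f : {rmorphism A -> B}) (K : A -> Prop)
    (K' : B -> Prop) (X : 'M[A]_(n.*2)) :
  (forall z, K z -> K' (f z)) -> EOrel n K X -> EOrel n K' (map_mx f X).
Proof.
move=> KK'; apply: gen_group_map => _ [G [G' [H [EOG G'G GG' EOH ->]]]].
exists (map_mx f G), (map_mx f G'), (map_mx f H); rewrite -!map_mxM G'G GG' !map_mx1.
by split => //; apply: EOI_map EOG || apply: EOI_map EOH.
Qed.

Section Levels.
Variables (A : comNzRingType) (n : nat) (al : A).
Implicit Types (J : A -> Prop) (t z : A) (i j : 'I_(n.*2)) (X : 'M[A]_(n.*2)).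

(* [scaled N J] is the ideal al^N J, [EOpow N J] is EO_2n(al^N J) and [EOrelpow N J] is the
   relative group EO_2n(al^N A, al^N J), the normal closure of EO_2n(al^N J) taken in
   EO_2n(al^N A) rather than in EO_2n(A). *)
Definition scaled N J z := exists t, J t /\ z = al ^+ N * t.

Definition EOpow N J := EOI n (scaled N J).

Definition EOrelpow N J :=
  normal_closure (oe_gen n (scaled N whole)) (oe_gen n (scaled N J)).

Definition EOrcoset N J := in_rcoset (oe_gen n (scaled N whole)) (oe_gen n (scaled N J)).

Lemma scaledN N J z : is_ideal J -> scaled N J z -> scaled N J (- z).
Proof. by move=> idJ [t [Jt ->]]; exists (- t); rewrite mulrN; split => //; apply: is_idealN. Qed.

Lemma scaled_mono M N J z : is_ideal J -> (M <= N)%N -> scaled N J z -> scaled M J z.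
Proof.
move=> idJ MN [t [Jt ->]]; exists (al ^+ (N - M) * t); split; first exact: is_idealMl.
by rewrite mulrA -exprD subnKC.
Qed.

Lemma EOpow_oe M N J i j t : is_ideal J -> (M <= N)%N -> admissible i j -> J t ->
  EOpow M J (oe i j (al ^+ N * t)).
Proof. by move=> idJ MN ij Jt; apply: EOI_oe => //; apply: (scaled_mono idJ MN); exists t. Qed.

Lemma EOpow_mono M N J X : is_ideal J -> (M <= N)%N -> EOpow N J X -> EOpow M J X.
Proof. by move=> idJ MN; apply: EOI_sub => z; apply: scaled_mono. Qed.

Lemma EOpow_whole N J X : EOpow N J X -> EOpow N whole X.
Proof. by apply: EOI_sub => z [t [_ ->]]; exists t. Qed.

Lemma EOrelpow_EOpow N J X : EOrelpow N J X -> EOpow N whole X.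
Proof. by apply: normal_closure_subgroup; [apply: invertible_oe_gen | apply: EOpow_whole]. Qed.

Lemma EOrelpow0_EOrel J X : EOrelpow 0 J X -> EOrel n J X.
Proof.
apply: normal_closure_sub => g /oe_genP[i [j [z [ij [t [Jt ->]] ->]]]];
  by apply: oe_gen_oe; rewrite // expr0 mul1r.
Qed.

End Levels.

Section Descent.
Variables (A B : comNzRingType) (psi : {rmorphism A -> B}) (n : nat) (al : A).
Hypothesis n_ge3 : (3 <= n)%N.
Local Notation m := (n.*2).
Local Notation Ps := (map_mx psi).
Local Notation lam := (psi al).
Local Notation EOpow := (@EOpow _ n al).
Local Notation EOrelpow := (@EOrelpow _ n al).
Local Notation EOrcoset := (@EOrcoset _ n al).
Implicit Types (i j p q h : 'I_m) (c : B) (r t : A) (J : A -> Prop).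
Implicit Types (C D H : 'M[B]_m) (g X Y V W : 'M[A]_m).

Definition intertwines C X W := C *m Ps X = Ps W *m C.

Lemma intertwines1 C : intertwines C 1%:M 1%:M.
Proof. by rewrite /intertwines !map_mx1 mulmx1 mul1mx. Qed.

Lemma intertwinesM C X Y V W :
  intertwines C X V -> intertwines C Y W -> intertwines C (X *m Y) (V *m W).
Proof. by rewrite /intertwines !map_mxM => XV YW; rewrite mulmxA XV -mulmxA YW mulmxA. Qed.

Lemma intertwinesV C X X' W W' :
  intertwines C X W -> X *m X' = 1%:M -> W' *m W = 1%:M -> intertwines C X' W'.
Proof.
move=> XW XX' W'W; rewrite /intertwines.
have -> : C *m Ps X' = Ps (W' *m W) *m C *m Ps X' by rewrite W'W map_mx1 mul1mx.
by rewrite map_mxM -!mulmxA (mulmxA (Ps W)) -XW -mulmxA -map_mxM XX' map_mx1 mulmx1.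
Qed.

Lemma intertwines_comp C D X Y W :
  intertwines D X Y -> intertwines C Y W -> intertwines (C *m D) X W.
Proof. by move=> XY YW; rewrite /intertwines -mulmxA XY mulmxA YW mulmxA. Qed.

Lemma intertwines_swap C C' X Y : intertwines C' X Y -> C *m C' = 1%:M -> C' *m C = 1%:M ->
  intertwines C Y X.
Proof.
move=> XY CC' C'C; rewrite /intertwines.
have -> : C *m Ps Y = C *m (Ps Y *m C') *m C by rewrite -!mulmxA C'C mulmx1.
by rewrite -XY mulmxA CC' mul1mx.
Qed.

(* [c * lam ^+ k = psi r] presents c as the fraction r / lam^k; its denominator is absorbed
   by k of the N powers of al. *)
Lemma conj_oe_chevalley i j c k r p q N M t :
  admissible i j -> c * lam ^+ k = psi r -> (M + k <= N)%N -> admissible p q ->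
  ~~ ((p == j) && (q == i)) -> ~~ ((p == sg i) && (q == sg j)) ->
  exists p' q' s, admissible p' q' /\ intertwines (oe i j c) (oe p q (al ^+ N * t))
    (oe p q (al ^+ N * t) *m oe p' q' (al ^+ M * (r * s * t))).
Proof.
move=> ij cr MkN pq not_ji not_sij.
have [p' [q' [z [pq' E]]]] := oe_chevalley c (psi (al ^+ N * t)) ij pq not_ji not_sij.
exists p', q', (z%:~R * al ^+ (N - k - M)); split => //.
rewrite /intertwines map_mxM !map_oe E; congr (_ *m _ *m _); congr oe.
set d := (N - k - M)%N; have -> : N = (M + k + d)%N by rewrite /d; lia.
by rewrite !rmorphM !rmorphXn rmorph_int -cr !exprD; ring.
Qed.

Lemma conj_oe_simple i j c k r p q N M t J :
  admissible i j -> c * lam ^+ k = psi r -> (M + k <= N)%N -> admissible p q ->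
  ~~ ((p == j) && (q == i)) -> ~~ ((p == sg i) && (q == sg j)) -> is_ideal J ->
  exists W, [/\ intertwines (oe i j c) (oe p q (al ^+ N * t)) W, EOpow M whole W,
    J t -> EOrelpow M J W & J r -> EOrcoset M J (oe p q (al ^+ N * t)) W].
Proof.
move=> ij cr MkN pq not_ji not_sij idJ.
have [p' [q' [s [pq' E]]]] := conj_oe_chevalley t ij cr MkN pq not_ji not_sij.
have MN : (M <= N)%N by lia.
exists (oe p q (al ^+ N * t) *m oe p' q' (al ^+ M * (r * s * t))); split => //.
- by apply: gen_group_mul; apply: EOpow_oe.
- move=> Jt; apply: normal_closure_of; apply: gen_group_mul; apply: EOpow_oe => //.
  exact: is_idealMl.
- move=> Jr; apply: in_rcoset_mulr; first exact: invertible_oe_gen.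
    by apply: EOpow_oe.
  by apply/normal_closure_of/EOpow_oe => //; do 2 apply: (is_idealMr idJ).
Qed.

(* Through a fresh index h the opposite root element is the commutator of two non-opposite
   ones, after splitting al^N as al^(N - (M + k)) * al^(M + k) so that each keeps at least
   M + k powers of al. *)
Lemma conj_oe_opposite i j c k r N M t J :
  admissible i j -> c * lam ^+ k = psi r -> (2 * (M + k) <= N)%N -> is_ideal J ->
  exists W, [/\ intertwines (oe i j c) (oe j i (al ^+ N * t)) W,
    J t -> EOrelpow M J W & J r -> EOrcoset M J (oe j i (al ^+ N * t)) W].
Proof.
move=> ij cr le_N idJ; have [h [hi hj hsi hsj]] := exists_fresh_index i j n_ge3.
have ji := admissibleC ij; have hi' := admissible_fresh hi hsi.
have jh : admissible j h by apply/admissibleC/admissible_fresh.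
set u := (N - (M + k))%N; set v := (M + k)%N.
set p := oe j h (al ^+ u * t); set q := oe h i (al ^+ v * 1).
set p' := oe j h (- (al ^+ u * t)); set q' := oe h i (- (al ^+ v * 1)).
have -> : oe j i (al ^+ N * t) = q' *m p *m q *m p'.
  rewrite -oe_commutator_fresh //; congr oe.
  by rewrite mulr1 mulrAC -exprD /u /v subnK //; lia.
have [P [iP GP tP rP]] : exists P, [/\ intertwines (oe i j c) p P, EOpow M whole P,
    J t -> EOrelpow M J P & J r -> EOrcoset M J p P].
  by apply: (conj_oe_simple t ij cr); rewrite // ?eqxx ?(negbTE hi) ?(negbTE hsj) ?andbF // /u; lia.
have [Q [iQ GQ _ rQ]] : exists Q, [/\ intertwines (oe i j c) q Q, EOpow M whole Q,
    J 1 -> EOrelpow M J Q & J r -> EOrcoset M J q Q].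
  by apply: (conj_oe_simple 1 ij cr); rewrite // ?eqxx ?(negbTE hj) ?(negbTE hsi) ?andbF // /v; lia.
have invG := @invertible_oe_gen A n (scaled al M whole).
have [P' [_ PP' P'P]] := gen_groupV invG GP.
have [Q' [_ QQ' Q'Q]] := gen_groupV invG GQ.
have pp' : p *m p' = 1%:M by rewrite oeNr.
have p'p : p' *m p = 1%:M by rewrite oeNl.
have qq' : q *m q' = 1%:M by rewrite oeNr.
have q'q : q' *m q = 1%:M by rewrite oeNl.
exists (Q' *m P *m Q *m P'); split.
- apply: intertwinesM; last exact: intertwinesV iP pp' P'P.
  by apply: intertwinesM => //; apply: intertwinesM => //; apply: intertwinesV iQ qq' Q'Q.
- by move=> Jt; apply: normal_closure_commutator => //; [apply: invertible_oe_gen | apply: tP].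
- move=> Jr; apply: in_rcoset_commutator (rQ Jr) (rP Jr) => //; try apply: invertible_oe_gen.
    by apply: EOpow_oe; rewrite // /v; lia.
  by apply: EOpow_oe; rewrite // /u; lia.
Qed.

Lemma conj_oe i j c k r p q N M t J :
  admissible i j -> c * lam ^+ k = psi r -> (2 * (M + k) <= N)%N -> admissible p q ->
  is_ideal J ->
  exists W, [/\ intertwines (oe i j c) (oe p q (al ^+ N * t)) W,
    J t -> EOrelpow M J W & J r -> EOrcoset M J (oe p q (al ^+ N * t)) W].
Proof.
move=> ij cr le_N pq idJ.
have [/andP[/eqP-> /eqP->]|not_ji] := boolP ((p == j) && (q == i)).
  by have [W oppW] := conj_oe_opposite t ij cr le_N idJ; exists W.
have [/andP[/eqP-> /eqP->]|not_sij] := boolP ((p == sg i) && (q == sg j)).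
  rewrite oe_sg -mulrN; have [W [iW tW rW]] := conj_oe_opposite (- t) ij cr le_N idJ.
  by exists W; split => // Jt; apply: tW; apply: is_idealN.
have MkN : (M + k <= N)%N by lia.
by have [W [iW _ tW rW]] := conj_oe_simple t ij cr MkN pq not_ji not_sij idJ; exists W.
Qed.

Lemma conj_oe_EOpow i j c k r N M J X :
  admissible i j -> c * lam ^+ k = psi r -> (2 * (M + k) <= N)%N -> is_ideal J ->
  EOpow N J X -> exists W, EOrelpow M J W /\ intertwines (oe i j c) X W.
Proof.
move=> ij cr le_N idJ; move: X; apply: EOI_ind => [z||p q _ X0 pq [t [Jt ->]] _ [W0 [RW0 iW0]]].
- exact: scaledN.
- by exists 1%:M; split; [apply: normal_closure1 | apply: intertwines1].
have [W [iW tW _]] := conj_oe t ij cr le_N pq idJ.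
by exists (W *m W0); split; [apply: normal_closure_mul; first apply: tW | apply: intertwinesM].
Qed.

Lemma conj_oe_EOrelpow i j c k r N M J X :
  admissible i j -> c * lam ^+ k = psi r -> (2 * (M + k) <= N)%N -> is_ideal J ->
  EOrelpow N J X -> exists W, EOrelpow M J W /\ intertwines (oe i j c) X W.
Proof.
move=> ij cr le_N idJ; move: X.
apply: gen_group_ind => [g h||g X0 [G [G' [H [EG G'G GG' EH ->]]]] _ [W0 [RW0 iW0]]].
- by apply: conj_gen_linv; apply: invertible_oe_gen.
- by exists 1%:M; split; [apply: normal_closure1 | apply: intertwines1].
have [G1 [/EOrelpow_EOpow EG1 iG1]] := conj_oe_EOpow ij cr le_N (@is_ideal_whole A) EG.
have [H1 [RH1 iH1]] := conj_oe_EOpow ij cr le_N idJ EH.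
have [G1' [_ G1G1' G1'G1]] := gen_groupV (@invertible_oe_gen _ _ _) EG1.
exists (G1 *m H1 *m G1' *m W0); split.
  by apply: normal_closure_mul RW0; apply: normal_closure_conj.
apply: intertwinesM iW0; apply: intertwinesM (intertwinesV iG1 GG' G1'G1).
exact: intertwinesM.
Qed.

Lemma comm_oe_EOpow i j c k r N M J V :
  admissible i j -> c * lam ^+ k = psi r -> J r -> (2 * (M + k) <= N)%N -> is_ideal J ->
  EOpow N whole V -> exists W, EOrcoset M J V W /\ intertwines (oe i j c) V W.
Proof.
move=> ij cr Jr le_N idJ; move: V.
apply: EOI_ind => [z||p q _ X0 pq [t [_ ->]] _ [W0 [RW0 iW0]]].
- exact: scaledN.
- by exists 1%:M; split; [apply: in_rcoset_refl | apply: intertwines1].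
have [W [iW _ rW]] := conj_oe t ij cr le_N pq idJ.
exists (W *m W0); split; last exact: intertwinesM.
apply: in_rcoset_mul (rW Jr) RW0; first exact: invertible_oe_gen.
by apply: EOpow_oe => //; lia.
Qed.

Definition is_fraction c := exists k r, c * lam ^+ k = psi r.

Definition is_fraction_in J c := exists k r, J r /\ c * lam ^+ k = psi r.

Lemma is_fractionN c : is_fraction c -> is_fraction (- c).
Proof. by case=> k [r cr]; exists k, (- r); rewrite mulNr cr rmorphN. Qed.

Lemma is_fraction_inN J c : is_ideal J -> is_fraction_in J c -> is_fraction_in J (- c).
Proof.
move=> idJ [k [r [Jr cr]]]; exists k, (- r).
by rewrite mulNr cr rmorphN; split => //; apply: is_idealN.
Qed.

Definition conj_descends C J := forall M, exists N, forall X,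
  EOrelpow N J X -> exists W, EOrelpow M J W /\ intertwines C X W.

Definition comm_descends C J := forall M, exists N, forall V,
  EOpow N whole V -> exists W, EOrcoset M J V W /\ intertwines C V W.

Lemma EOI_conj_descends J C : is_ideal J -> EOI n is_fraction C -> conj_descends C J.
Proof.
move=> idJ; move: C; apply: EOI_ind => [c||i j c C ij [k [r cr]] _ dC M].
- exact: is_fractionN.
- by move=> M; exists M => X RX; exists X; split; rewrite /intertwines ?mul1mx ?mulmx1.
have [N dN] := dC (2 * (M + k))%N; exists N => X /dN[W1 [RW1 iW1]].
have [W [RW iW]] := conj_oe_EOrelpow ij cr (leqnn _) idJ RW1.
by exists W; split => //; apply: intertwines_comp iW1 iW.
Qed.

Lemma EOI_comm_descends J H : is_ideal J -> EOI n (is_fraction_in J) H -> comm_descends H J.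
Proof.
move=> idJ; move: H; apply: EOI_ind => [c||i j c H ij [k [r [Jr cr]]] _ dH M].
- exact: is_fraction_inN.
- move=> M; exists M => V _; exists V; split; last by rewrite /intertwines mul1mx mulmx1.
  exact: in_rcoset_refl.
set M1 := (2 * (M + k))%N; have [N1 dN1] := dH M1.
exists (maxn N1 M1) => V EV.
have [_ [[R1 [RR1 ->]] iW1]] := dN1 V (EOpow_mono is_ideal_whole (leq_maxl _ _) EV).
have [R1' [RR1' iR1']] := conj_oe_EOrelpow ij cr (leqnn _) idJ RR1.
have [_ [[R2 [RR2 ->]] iW2]] :=
  comm_oe_EOpow ij cr Jr (leqnn _) idJ (EOpow_mono is_ideal_whole (leq_maxr _ _) EV).
exists (R1' *m R2 *m V); split.
  by exists (R1' *m R2); split => //; apply: normal_closure_mul.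
by apply: intertwines_comp iW1 _; rewrite -mulmxA; apply: intertwinesM.
Qed.

Lemma comm_descends_conj J C C' H : conj_descends C J -> conj_descends C' whole ->
  comm_descends H J -> C *m C' = 1%:M -> C' *m C = 1%:M -> comm_descends (C *m H *m C') J.
Proof.
move=> dC dC' dH CC' C'C M.
have [N1 dN1] := dC M; have [N2 dN2] := dH N1; have [N3 dN3] := dC' N2.
exists N3 => V EV; have [V2 [RV2 iV2]] := dN3 V (normal_closure_of EV).
have [_ [[R [RR ->]] iR]] := dN2 V2 (EOrelpow_EOpow RV2).
have [R' [RR' iR']] := dN1 R RR.
have iV := intertwines_swap iV2 CC' C'C.
exists (R' *m V); split; first by exists R'.
apply: intertwines_comp iV2 _; apply: intertwines_comp iR _.
exact: intertwinesM.
Qed.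

End Descent.

Section ExtIdeal.
Variables (A B : comNzRingType) (f : A -> B) (J : A -> Prop).
Local Notation Je := (ext_ideal f J).

Lemma ext_ideal0 : Je 0.
Proof. by exists [::]; rewrite big_nil. Qed.

Lemma ext_ideal_gen x y : J x -> Je (f x * y).
Proof. by move=> Jx; exists [:: (x, y)]; rewrite big_seq1; split => // p /[!inE] /eqP ->. Qed.

Lemma ext_idealD u v : Je u -> Je v -> Je (u + v).
Proof.
move=> [s1 [J1 ->]] [s2 [J2 ->]]; exists (s1 ++ s2); rewrite big_cat; split => // p.
by rewrite mem_cat => /orP[]; [apply: J1 | apply: J2].
Qed.

Lemma ext_idealMl r u : Je u -> Je (r * u).
Proof.
move=> [s [Js ->]]; exists [seq (p.1, r * p.2) | p <- s]; split.
  by move=> q /mapP[p ps ->]; apply: (Js p ps).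
by rewrite big_map mulr_sumr; apply: eq_bigr => p _ /=; rewrite mulrCA.
Qed.

Lemma is_ideal_ext : is_ideal Je.
Proof. by split; [apply: ext_ideal0 | apply: ext_idealD | apply: ext_idealMl]. Qed.

Lemma ext_ideal_ind (P : B -> Prop) : P 0 ->
  (forall x y u, J x -> Je u -> P u -> P (f x * y + u)) -> forall u, Je u -> P u.
Proof.
move=> P0 PS u [s [Js ->]]; elim: s Js => [|[x y] s IH] Js; first by rewrite big_nil.
have Js' : {in s, forall p, J p.1} by move=> p ps; apply: Js; rewrite inE ps orbT.
rewrite big_cons; apply: PS; [by apply: (Js (x, y)); rewrite inE eqxx | by exists s | exact: IH].
Qed.

End ExtIdeal.

Definition eventually_adic (R : comNzRingType) (a : R) (P : R -> Prop) :=
  exists d, forall b, (exists s, b = a ^+ d * s) -> P b.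

Lemma eventually_adic_and (R : comNzRingType) (a : R) (P Q : R -> Prop) :
  eventually_adic a P -> eventually_adic a Q -> eventually_adic a (fun b => P b /\ Q b).
Proof.
have dvd_mono d d' b : (d <= d')%N -> (exists s, b = a ^+ d' * s) -> exists s, b = a ^+ d * s.
  by move=> le [s ->]; exists (a ^+ (d' - d) * s); rewrite mulrA -exprD subnKC.
move=> [d1 P1] [d2 Q2]; exists (maxn d1 d2) => b bd; split.
  exact/P1/(dvd_mono _ _ _ (leq_maxl _ _) bd).
exact/Q2/(dvd_mono _ _ _ (leq_maxr _ _) bd).
Qed.

Lemma eventually_adicW (R : comNzRingType) (a : R) (P Q : R -> Prop) :
  (forall b, P b -> Q b) -> eventually_adic a P -> eventually_adic a Q.
Proof. by move=> PQ [d Pd]; exists d => b /Pd; apply: PQ. Qed.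

Definition const_poly (T : comNzRingType) : {rmorphism {poly T} -> {poly T}} :=
  (polyC \o horner_eval 0)%FUN.

Section Localisation.
Variables (R S : comNzRingType) (phi : {rmorphism R -> S}) (a : R) (I : R -> Prop).
Hypothesis locS : is_localization a phi.
Local Notation psi := (map_poly phi).
Local Notation al := (a%:P : {poly R}).
Local Notation J0 := (ext_ideal (fun r : R => r%:P) I).
Local Notation K0 := (ext_ideal (fun r : R => (phi r)%:P) I).
Local Notation dil b := (comp_poly ((phi b)%:P * 'X)).

Lemma psi_al : psi al = (phi a)%:P.
Proof. exact: map_polyC. Qed.

Lemma poly_fraction (p : {poly S}) : is_fraction psi al p.
Proof.
case: locS => _ fracS _; rewrite /is_fraction /= psi_al.
elim/poly_ind: p => [|p c [k1 [r1 E1]]]; first by exists 0%N, 0; rewrite mul0r rmorph0.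
have [r2 [k2 E2]] := fracS c.
exists (k1 + k2)%N, (r1 * 'X * (a ^+ k2)%:P + (r2 * a ^+ k1)%:P).
rewrite !(rmorphD, rmorphM, rmorphXn) /= map_polyX !map_polyC /= -E1 -E2.
by rewrite polyCM rmorphXn exprD; ring.
Qed.

Lemma ext_ideal_fraction (z : {poly S}) : K0 z -> is_fraction_in psi al J0 z.
Proof.
rewrite /is_fraction_in /= psi_al; elim/ext_ideal_ind => [|x y u Ix _ [k1 [r1 [Jr1 E1]]]].
  by exists 0%N, 0; rewrite mul0r rmorph0; split => //; apply: ext_ideal0.
have [k2 [r2 E2]] := poly_fraction y; rewrite /= psi_al in E2.
exists (k1 + k2)%N, (x%:P * (r2 * al ^+ k1) + r1 * al ^+ k2); split.
  by apply: ext_idealD; [apply: ext_ideal_gen | rewrite mulrC; apply: ext_idealMl].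
by rewrite rmorphD !rmorphM !rmorphXn /= psi_al map_polyC -E1 -E2 exprD; ring.
Qed.

Lemma fraction_comp (z : {poly S}) k r (y : {poly R}) :
  z * psi al ^+ k = psi r -> (z \Po psi y) * psi al ^+ k = psi (r \Po y).
Proof.
rewrite psi_al => zr; have Lk : (phi a)%:P ^+ k = (phi a ^+ k)%:P by rewrite rmorphXn.
by rewrite Lk -(comp_polyC _ (psi y)) -comp_polyM -Lk zr; apply: esym; apply: map_comp_poly.
Qed.

Lemma fraction_const (z : {poly S}) k r :
  z * psi al ^+ k = psi r -> (z.[0])%:P * psi al ^+ k = psi (r.[0])%:P.
Proof.
rewrite psi_al -rmorphXn map_polyC => /(congr1 (horner^~ 0)).
by rewrite hornerM hornerC -{2}(rmorph0 phi) horner_map -polyCM => ->.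
Qed.

Lemma is_fraction_const z : is_fraction psi al z -> is_fraction psi al (const_poly S z).
Proof. by case=> k [r /fraction_const zr]; exists k, (r.[0])%:P. Qed.

Lemma ext_ideal_const r : J0 r -> J0 (const_poly R r).
Proof.
elim/ext_ideal_ind => [|x y u Ix _ IH]; first by rewrite rmorph0; apply: ext_ideal0.
rewrite rmorphD rmorphM /= horner_evalE hornerC; apply: ext_idealD IH.
exact: ext_ideal_gen.
Qed.

Lemma is_fraction_in_const z :
  is_fraction_in psi al J0 z -> is_fraction_in psi al J0 (const_poly S z).
Proof.
by case=> k [r [Jr /fraction_const zr]]; exists k, (r.[0])%:P; split => //; apply: ext_ideal_const.
Qed.

Lemma fraction_cancel (x y : {poly S}) k : x * psi al ^+ k = y * psi al ^+ k -> x = y.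
Proof.
case: locS => [[u au] _ _]; rewrite psi_al => /(congr1 (fun w => w * (u%:P) ^+ k)).
by rewrite -!mulrA -exprMn -polyCM au expr1n !mulr1.
Qed.

Lemma comp_sub_const_dvd (r y : {poly R}) : exists q, r \Po y - (r.[0])%:P = y * q.
Proof.
elim/poly_ind: r => [|p c _]; first by exists 0; rewrite comp_poly0 horner0 subr0 mulr0.
exists (p \Po y); rewrite comp_poly_MXaddC hornerD hornerMX hornerC mulr0 add0r addrK.
by rewrite mulrC.
Qed.

Definition dilatable (K : {poly S} -> Prop) (J : {poly R} -> Prop) :=
  forall z, K z -> forall M, eventually_adic a (fun b =>
    exists t, J t /\ dil b z - (z.[0])%:P = psi (al ^+ M * t)).

Lemma dilatable_whole : dilatable whole whole.
Proof.
move=> z _ M; have [k [r zr]] := poly_fraction z; exists (M + k)%N => _ [s ->].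
set y := (a ^+ (M + k) * s)%:P * 'X.
have [q Eq] := comp_sub_const_dvd r y.
exists (s%:P * 'X * q); split => //; apply: (@fraction_cancel _ _ k).
have psi_y : (phi (a ^+ (M + k) * s))%:P * 'X = psi y.
  by rewrite [in RHS]rmorphM /= map_polyX map_polyC.
rewrite psi_y mulrBl (fraction_comp _ zr) (fraction_const zr) -rmorphB Eq /y.
by rewrite !(rmorphM, rmorphXn) /= !map_polyC exprD; ring.
Qed.

Lemma dilatable_ext : dilatable K0 J0.
Proof.
rewrite /dilatable; apply: ext_ideal_ind => [|x y u Ix _ IH] M.
  exists 0%N => b _; exists 0; split; first exact: ext_ideal0.
  by rewrite comp_poly0 horner0 subr0 mulr0 rmorph0.
apply: eventually_adicW (eventually_adic_and (IH M) (@dilatable_whole y Logic.I M)).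
move=> b [[t1 [Jt1 E1]] [t2 [_ E2]]]; exists (x%:P * t2 + t1); split.
  by apply: ext_idealD => //; apply: ext_ideal_gen.
rewrite comp_polyD comp_polyM comp_polyC hornerD hornerM hornerC polyCD polyCM.
have -> : (phi x)%:P * dil b y + dil b u - ((phi x)%:P * (y.[0])%:P + (u.[0])%:P) =
  (phi x)%:P * (dil b y - (y.[0])%:P) + (dil b u - (u.[0])%:P) by ring.
by rewrite E1 E2 !(rmorphD, rmorphM) /= map_polyC; ring.
Qed.

End Localisation.

Section Dilation.
Variables (R S : comNzRingType) (phi : {rmorphism R -> S}) (a : R) (I : R -> Prop) (n : nat).
Hypotheses (locS : is_localization a phi) (n_ge3 : (3 <= n)%N).
Local Notation m := (n.*2).
Local Notation psi := (map_poly phi : {rmorphism {poly R} -> {poly S}}).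
Local Notation Ps := (map_mx psi).
Local Notation al := (a%:P : {poly R}).
Local Notation J0 := (ext_ideal (fun r : R => r%:P) I).
Local Notation K0 := (ext_ideal (fun r : R => (phi r)%:P) I).
Local Notation dil b := (comp_poly ((phi b)%:P * 'X)).
Local Notation c0 := (map_mx (const_poly S)).
Implicit Types (J : {poly R} -> Prop) (K : {poly S} -> Prop) (Z g H : 'M[{poly S}]_m).

Definition dil_splits J Z := forall M, eventually_adic a (fun b => exists W,
  EOrelpow al M J W /\ map_mx (dil b) Z = Ps W *m c0 Z).

Lemma EOI_fraction K Z : EOI n K Z -> EOI n (is_fraction psi al) (c0 Z).
Proof. by apply: EOI_map => z _; apply/is_fraction_const/poly_fraction. Qed.

Lemma EOI_fraction_in Z : EOI n K0 Z -> EOI n (is_fraction_in psi al J0) (c0 Z).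
Proof. by apply: EOI_map => z /ext_ideal_fraction/is_fraction_in_const; apply. Qed.

Lemma dil_splits1 J : dil_splits J 1%:M.
Proof.
move=> M; exists 0%N => b _; exists 1%:M; split; first exact: normal_closure1.
by rewrite !map_mx1 mul1mx.
Qed.

Lemma dil_splits_oe K J i j z : is_ideal J -> dilatable phi a K J -> admissible i j -> K z ->
  dil_splits J (oe i j z).
Proof.
move=> idJ dilK ij Kz M; apply: eventually_adicW (dilK z Kz M) => b [t [Jt Ez]].
exists (oe i j (al ^+ M * t)); split; first by apply/normal_closure_of/EOpow_oe.
by rewrite !map_oe oeD //=; congr oe; rewrite -Ez horner_evalE subrK.
Qed.

Lemma dil_splitsM J Z1 Z2 : conj_descends psi al (c0 Z1) J ->
  dil_splits J Z1 -> dil_splits J Z2 -> dil_splits J (Z1 *m Z2).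
Proof.
move=> dZ1 sZ1 sZ2 M; have [N dN] := dZ1 M.
apply: eventually_adicW (eventually_adic_and (sZ1 M) (sZ2 N)) => b.
move=> [[W1 [RW1 E1]] [W2 [RW2 E2]]]; have [W2' [RW2' iW2]] := dN W2 RW2.
exists (W1 *m W2'); split; first exact: normal_closure_mul.
have iW2' : c0 Z1 *m Ps W2 = Ps W2' *m c0 Z1 := iW2.
by rewrite !map_mxM E1 E2 -!mulmxA (mulmxA (c0 Z1)) iW2' !mulmxA.
Qed.

Lemma dil_splits_EOI K J Z : is_ideal J -> dilatable phi a K J ->
  (forall z, K z -> K (- z)) -> EOI n K Z -> dil_splits J Z.
Proof.
move=> idJ dilK KN; move: Z; apply: EOI_ind => // [|i j z Z ij Kz _ sZ].
  exact: dil_splits1.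
apply: (dil_splitsM _ _ sZ); last exact: dil_splits_oe idJ dilK ij Kz.
apply: (EOI_conj_descends n_ge3 idJ); rewrite map_oe; apply: EOI_oe => //.
exact/is_fraction_const/poly_fraction.
Qed.

Lemma map_const_poly_inv g g' : g' *m g = 1%:M -> c0 g' *m c0 g = 1%:M.
Proof. by move=> g'g; rewrite -map_mxM g'g map_mx1. Qed.

Lemma dil_splits_conj g g' H : EO n g -> g' *m g = 1%:M -> g *m g' = 1%:M -> EOI n K0 H ->
  dil_splits J0 (g *m H *m g').
Proof.
move=> EOg g'g gg' EOH M; have idJ0 := is_ideal_ext (fun r : R => r%:P) I.
have EOg' : EO n g' := gen_group_linv (@invertible_oe_gen _ _ _) EOg g'g.
have dC := EOI_conj_descends n_ge3 idJ0 (EOI_fraction EOg).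
have dC' := EOI_conj_descends n_ge3 is_ideal_whole (EOI_fraction EOg').
have dH := EOI_comm_descends n_ge3 idJ0 (EOI_fraction_in EOH).
have [NR dR] := comm_descends_conj dC dC' dH (map_const_poly_inv gg') (map_const_poly_inv g'g) M.
have [NH dNH] := dC M.
have sg := dil_splits_EOI is_ideal_whole (@dilatable_whole _ _ phi a locS) (fun _ _ => Logic.I)
  EOg (maxn M NR).
have sH := dil_splits_EOI idJ0 (dilatable_ext (I := I) locS) (is_idealN (is_ideal_ext _ I))
  EOH NH.
apply: eventually_adicW (eventually_adic_and sg sH) => b [[G [RG EG]] [H1 [RH1 EH]]].
have EOG := EOrelpow_EOpow RG.
have [G' [EOG' GG' G'G]] := gen_groupV (@invertible_oe_gen _ _ _) EOG.
have Eg' : c0 g' *m Ps G' = map_mx (dil b) g'.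
  apply: (mulmx_inv_uniq (X := map_mx (dil b) g)); first by rewrite -map_mxM gg' map_mx1.
  by rewrite EG mulmxA -(mulmxA (c0 g')) -map_mxM G'G map_mx1 mulmx1 map_const_poly_inv.
have [H2 [RH2 iH2]] := dNH H1 RH1.
have iH2' : c0 g *m Ps H1 = Ps H2 *m c0 g := iH2.
have [_ [[Rr [RRr ->]] iR]] := dR G' (EOpow_mono is_ideal_whole (leq_maxr _ _) EOG').
have iR' : c0 g *m c0 H *m c0 g' *m Ps G' = Ps (Rr *m G') *m (c0 g *m c0 H *m c0 g') := iR.
exists (G *m (H2 *m Rr) *m G'); split.
  apply: normal_closure_conj; rewrite ?GG' ?G'G //; last exact: normal_closure_mul.
  exact: EOpow_mono is_ideal_whole (leq_maxl _ _) EOG.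
rewrite !map_mxM EG EH -Eg'.
transitivity (Ps G *m (c0 g *m Ps H1) *m c0 H *m c0 g' *m Ps G'); first by rewrite !mulmxA.
rewrite iH2'.
transitivity (Ps G *m Ps H2 *m (c0 g *m c0 H *m c0 g' *m Ps G')); first by rewrite !mulmxA.
by rewrite iR' !map_mxM !mulmxA.
Qed.

Lemma dil_splits_EOrel Z : EOrel n K0 Z -> dil_splits J0 Z.
Proof.
move: Z; apply: gen_group_ind => [g h||_ Z [g [g' [H [EOg g'g gg' EOH ->]]]] _ sZ].
- by apply: conj_gen_linv; apply: invertible_oe_gen.
- exact: dil_splits1.
apply: dil_splitsM sZ; last exact: dil_splits_conj.
apply: (EOI_conj_descends n_ge3 (is_ideal_ext _ I)); apply: (@EOI_fraction whole).
apply: gen_group_mul; last exact: gen_group_linv (@invertible_oe_gen _ _ _) EOg g'g.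
by apply: gen_group_mul EOg (EOI_sub _ EOH).
Qed.

Lemma horner0_dil b (p : {poly S}) : (dil b p).[0] = p.[0].
Proof. by rewrite horner_comp hornerMX mulr0. Qed.

Lemma EOrel_normalize_const (W : 'M[{poly R}]_m) : EOrel n J0 W ->
  map_mx (horner_eval 0) (Ps W) = 1%:M ->
  exists W', [/\ EOrel n J0 W', map_mx (horner_eval 0) W' = 1%:M & Ps W' = Ps W].
Proof.
move=> EW W_0; set W0 := map_mx (const_poly R) W.
have EW0 : EOrel n J0 W0 by apply: EOrel_map EW => z; apply: ext_ideal_const.
have [W0' [EW0' W0W0' _]] := normal_closureV (@invertible_oe_gen _ _ _) EW0.
have W0_0 : map_mx (horner_eval 0) W0 = map_mx (horner_eval 0) W.
  by apply/matrixP => i j; rewrite !mxE /= !horner_evalE hornerC.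
have PsW0 : Ps W0 = 1%:M.
  apply/matrixP => i j; have := congr1 (fun X : 'M_m => (X i j)%:P) W_0.
  by rewrite !mxE /= map_polyC !horner_evalE !horner_coef0 coef_map /= => ->; rewrite polyC_natr.
exists (W *m W0'); split.
- exact: gen_group_mul.
- by rewrite map_mxM -W0_0 -map_mxM W0W0' map_mx1.
- by rewrite map_mxM -[Ps W0']mul1mx -PsW0 -map_mxM W0W0' map_mx1 mulmx1.
Qed.

End Dilation.

Theorem mainTheorem8 (R S : comNzRingType) (phi : {rmorphism R -> S})
    (I : R -> Prop) (n : nat) (a : R) (alpha : 'M[{poly S}]_(n.*2)) :
  is_ideal I -> (3 <= n)%N -> (forall k : nat, a ^+ k != 0) ->
  is_localization a phi ->
  EOrel n (ext_ideal (fun r => (phi r)%:P) I) alpha ->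
  map_mx (fun p => p.[0]) alpha = 1%:M ->
  exists d : nat, forall b : R, (exists r, b = a ^+ d * r) ->
    exists astar : 'M[{poly R}]_(n.*2),
      [/\ EOrel n (ext_ideal (fun r => r%:P) I) astar,
          map_mx (fun p => p.[0]) astar = 1%:M
        & map_mx (map_poly phi) astar
          = map_mx (fun p => p \Po ((phi b)%:P * 'X)) alpha].
Proof.
move=> _ n_ge3 _ locS EOalpha alpha_0.
have [d split_d] := dil_splits_EOrel locS n_ge3 EOalpha 0.
exists d => b /split_d[W [RW E]].
have c0_alpha : map_mx (const_poly S) alpha = 1%:M.
  apply/matrixP => i j; move/matrixP/(_ i j): alpha_0.
  by rewrite !mxE /= horner_evalE => ->; rewrite polyC_natr.
rewrite c0_alpha mulmx1 in E.
have W_0 : map_mx (horner_eval 0) (map_mx (map_poly phi) W) = 1%:M.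
  apply/matrixP => i j; move/matrixP/(_ i j): alpha_0.
  by rewrite -E !mxE /= horner_evalE horner0_dil.
have [W' [EW' W'_0 PsW']] := EOrel_normalize_const (EOrelpow0_EOrel RW) W_0.
exists W'; split => //; exact: etrans PsW' (esym E).
Qed.
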